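(* Let $d\ge3$, $\alpha\in(0,1/2)$, $z\in(0,1)$, and for $\beta>0$ set $y=y(\beta)=-\beta^{-1}\log z$. Let $r_1,\dots,r_d$ be independent with distribution $\alpha\delta_{-1}+(1-2\alpha)\delta_0+\alpha\delta_1$, let $\rho_i(\sigma)=\frac{1+\sigma r_i}{2}$ for $\sigma=\pm1$, and $X_1=\sum_{\tau\in\{\pm1\}}\prod_{h=1}^d\left(1-(1-e^{-\beta})\rho_h(\tau)\right)$. Then \[\lim_{\beta\to\infty}\log\mathbb{E}[X_1^y]=\log(\zeta\mathcal{A}^d\xi),\] where $\mathcal{A}=(1-2\alpha)I+2\alpha\sqrt z\,\mathcal{M}$, $I$ is the $(d+1)\times(d+1)$ identity, $\zeta=(1,0,\dots,0)\in\mathbb{R}^{1\times(d+1)}$, $\xi=(1,z^{-1/2},z^{-1},\dots,z^{-d/2})^T\in\mathbb{R}^{(d+1)\times1}$, and $\mathcal{M}$ is the $(d+1)\times(d+1)$ matrix indexed by $0,\dots,d$ with $\mathcal{M}_{0,1}=\mathcal{M}_{d,d-1}=1$, $\mathcal{M}_{i,i-1}=\mathcal{M}_{i,i+1}=1/2$ for $1\le i\le d-1$, and all other entries $0$.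
   Context: $\delta_x$ denotes the point mass at $x$. *)

From HB Require Import structures.
From mathcomp Require Import all_boot all_order all_algebra.
From mathcomp Require Import all_classical all_reals all_analysis.
Set Implicit Arguments. Unset Strict Implicit. Unset Printing Implicit Defensive.
Import Order.TTheory GRing.Theory Num.Theory.
Import numFieldNormedType.Exports.
Local Open Scope ring_scope.

Section Lemma62Defs.
Variables (R : realType) (d : nat) (alpha z : R).

(* the value of r_i encoded by k : 'I_3 is k - 1 in {-1,0,1} *)
Definition rval (k : 'I_3) : R := (k : nat)%:R - 1.
Definition rprob (k : 'I_3) : R := if (k : nat) == 1%N then 1 - 2 * alpha else alpha.

Definition rho (r : {ffun 'I_d -> 'I_3}) (i : 'I_d) (sigma : R) : R :=
  (1 + sigma * rval (r i)) / 2.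

Definition X1 (beta : R) (r : {ffun 'I_d -> 'I_3}) : R :=
  \sum_(tau <- [:: 1; -1]) \prod_(h < d) (1 - (1 - expR (- beta)) * rho r h tau).

Definition yb (beta : R) : R := - (ln z) / beta.

(* E[X_1^y] for independent r_1..r_d: expectation over the finite product law *)
Definition EX1y (beta : R) : R :=
  \sum_(r : {ffun 'I_d -> 'I_3}) (\prod_(h < d) rprob (r h)) * (X1 beta r) `^ (yb beta).

Definition Mmat : 'M[R]_(d.+1) :=
  \matrix_(i, j)
    if (i : nat) == 0%N then ((j : nat) == 1%N)%:R
    else if (i : nat) == d then ((j : nat) == d.-1)%:R
    else (((j : nat) == (i : nat).-1) || ((j : nat) == (i : nat).+1))%:R / 2.

Definition Amat : 'M[R]_(d.+1) := (1 - 2 * alpha)%:M + (2 * alpha * Num.sqrt z) *: Mmat.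

Definition zeta : 'rV[R]_(d.+1) := \row_(j < d.+1) ((j : nat) == 0%N)%:R.

Definition xi : 'cV[R]_(d.+1) := \col_(k < d.+1) z `^ (- ((k : nat)%:R / 2)).

Definition limit_value : R := (zeta *m Amat ^+ d *m xi) 0 0.

End Lemma62Defs.

From HB Require Import structures.
From mathcomp Require Import all_boot all_order all_algebra.
From mathcomp Require Import all_classical all_reals all_analysis.
From mathcomp Require Import zify ring lra.
Set Implicit Arguments. Unset Strict Implicit. Unset Printing Implicit Defensive.
Import Order.TTheory GRing.Theory Num.Theory.
Import numFieldNormedType.Exports.
Local Open Scope classical_set_scope.
Local Open Scope ring_scope.

(* Write e = exp(-beta) and let c-, c0, c+ be the numbers of entries of r equal
   to -1, 0, 1.  Then X_1 = ((1+e)/2)^c0 (e^c+ + e^c-), and since e^y = z, the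
   factor e^min(c+,c-) of X_1 contributes exactly z^min(c+,c-) to X_1^y, while
   the remaining factor tends to a positive constant and is raised to y -> 0.
   Hence E[X_1^y] -> E[z^min(c+,c-)].
   On the matrix side, zeta A^n is the law of the walk |c+ - c-| reflected at 0
   after n steps, every nonzero step weighted by sqrt z; during the first d steps
   the walk stays below d, so the boundary row d of M never matters.  Pairing
   with xi gives E[sqrt z^(c+ + c-) z^(-|c+ - c-|/2)] = E[z^min(c+,c-)]. *)

Section FiniteFunctionsOnOrdinals.
Variable T : finType.

Definition fcons n (k : T) (g : {ffun 'I_n -> T}) : {ffun 'I_n.+1 -> T} :=
  [ffun i => if unlift ord0 i is Some j then g j else k].

Lemma fcons0 n k (g : {ffun 'I_n -> T}) : fcons k g ord0 = k.
Proof. by rewrite ffunE unlift_none. Qed.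

Lemma fconsS n k (g : {ffun 'I_n -> T}) j : fcons k g (lift ord0 j) = g j.
Proof. by rewrite ffunE liftK. Qed.

Lemma big_fcons (R : Type) (idx : R) (op : Monoid.com_law idx) n
    (F : {ffun 'I_n.+1 -> T} -> R) :
  \big[op/idx]_r F r = \big[op/idx]_k \big[op/idx]_(g : {ffun 'I_n -> T}) F (fcons k g).
Proof.
rewrite pair_big (reindex (fun p : T * {ffun 'I_n -> T} => fcons p.1 p.2)) //=.
exists (fun r => (r ord0, [ffun j => r (lift ord0 j)])) => [[k g] _|r _] /=.
  by rewrite fcons0; congr pair; apply/ffunP => j; rewrite ffunE fconsS.
by apply/ffunP => i; rewrite ffunE; case: unliftP => [j ->|->] //; rewrite ffunE.
Qed.

Definition occ n (k : T) (r : {ffun 'I_n -> T}) : nat := (\sum_(h < n) (r h == k))%N.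

Lemma occ_fcons n k k' (g : {ffun 'I_n -> T}) :
  occ k' (fcons k g) = ((k == k') + occ k' g)%N.
Proof.
by rewrite /occ big_ord_recl fcons0; under eq_bigr do rewrite fconsS.
Qed.

Lemma sum_occ n (r : {ffun 'I_n -> T}) : (\sum_k occ k r)%N = n.
Proof.
rewrite exchange_big /= -[RHS]card_ord -sum1_card; apply: eq_big => // h _.
by rewrite (bigD1 (r h)) //= eqxx big1 // => k; rewrite eq_sym => /negbTE ->.
Qed.

Lemma prod_occ (R : comPzSemiRingType) n (F : T -> R) (r : {ffun 'I_n -> T}) :
  \prod_(h < n) F (r h) = \prod_k F k ^+ occ k r.
Proof.
under [RHS]eq_bigr do rewrite -prodrXr.
rewrite exchange_big /=; apply: eq_bigr => h _.
by rewrite (bigD1 (r h)) //= eqxx big1 ?mulr1 // => k; rewrite eq_sym => /negbTE ->.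
Qed.

End FiniteFunctionsOnOrdinals.

Lemma sum_natr_eq_inord (R : pzSemiRingType) m (D : nat) (c : 'I_m.+1 -> R) :
  (D < m.+1)%N -> \sum_(i < m.+1) (D == i)%:R * c i = c (inord D).
Proof.
move=> Dm; rewrite (bigD1 (inord D)) //= inordK // eqxx mul1r big1 ?addr0 // => i.
by have [->|_] := eqVneq D i; rewrite ?inord_val ?eqxx ?mul0r.
Qed.

Lemma sqrtrX_powRN_dist (R : realType) (z : R) (a b : nat) : 0 < z ->
  Num.sqrt z ^+ (a + b) * z `^ (- (`|a - b|%N%:R / 2)) = z ^+ minn a b.
Proof.
move=> z0; have -> : (a + b = `|a - b| + (minn a b).*2)%N by lia.
rewrite exprD -mul2n exprM sqr_sqrtr ?ltW // powRN mulrAC.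
rewrite [X in z `^ X]mulrC powRrM powR12_sqrt ?ltW // powR_mulrn ?sqrtr_ge0 //.
by rewrite mulfV ?mul1r // expf_neq0 // sqrtr_eq0 -ltNge.
Qed.

Section PowerLimits.
Variable R : realType.

Lemma powR_cvg1 (T : Type) (F : set_system T) {FF : Filter F} (f g : T -> R) (l : R) :
  0 < l -> f @ F --> l -> g @ F --> 0 -> f x `^ g x @[x --> F] --> (1 : R).
Proof.
move=> l0 fl g0.
have : expR (g x * ln (f x)) @[x --> F] --> expR (0 * ln l).
  apply: continuous_cvg; first exact: continuous_expR.
  by apply: cvgM => //; apply: continuous_cvg => //; exact: continuous_ln.
rewrite mul0r expR0 => e_cvg; apply: (cvg_trans _ e_cvg); apply: near_eq_cvg.
near=> x; have fx0 : 0 < f x by near: x; exact: cvgr_gt fl _ l0.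
by rewrite /powR gt_eqF.
Unshelve. all: by end_near.
Qed.

Lemma cvg_invr_pinfty : x^-1 @[x --> +oo] --> (0 : R).
Proof. by apply/gtr0_cvgV0; [exact: nbhs_pinfty_gt | exact: cvg_id]. Qed.

Lemma horner_expRN_powR_cvg (q : {poly R}) (m : nat) (z : R) : 0 < z -> 0 < q.[0] ->
  ('X^m * q).[expR (- beta)] `^ (- ln z / beta) @[beta --> +oo] --> z ^+ m.
Proof.
move=> z0 q0.
have q_cvg : q.[expR (- beta)] @[beta --> +oo] --> q.[0].
  by apply: continuous_cvg; [exact: continuous_horner | exact: cvgr_expR].
have y_cvg : - ln z / beta @[beta --> +oo] --> 0.
  by rewrite -(mulr0 (- ln z)); apply: cvgMl_tmp; exact: cvg_invr_pinfty.
rewrite -[z ^+ m]mulr1.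
apply: (@cvg_trans _ (z ^+ m * q.[expR (- beta)] `^ (- ln z / beta) @[beta --> +oo])).
  2: by apply: cvgMl_tmp; exact: powR_cvg1 q0 q_cvg y_cvg.
apply: near_eq_cvg; near=> beta.
have beta0 : 0 < beta by near: beta; exact: nbhs_pinfty_gt.
have qe0 : 0 < q.[expR (- beta)] by near: beta; exact: cvgr_gt q_cvg _ q0.
rewrite hornerM hornerXn powRM ?exprn_ge0 ?expR_ge0 ?ltW // -expRM_natl -expRM.
rewrite (_ : m%:R * - beta * _ = m%:R * ln z) ?expRM_natl ?lnK //; field; exact: lt0r_neq0.
Unshelve. all: by end_near.
Qed.

End PowerLimits.

(* The codes of the values -1, 0, 1 of r_i, see [rval]. *)
Definition k0 : 'I_3 := Ordinal (isT : (0 < 3)%N).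
Definition k1 : 'I_3 := Ordinal (isT : (1 < 3)%N).
Definition k2 : 'I_3 := Ordinal (isT : (2 < 3)%N).

Lemma big_ord3 (R : Type) (idx : R) (op : Monoid.law idx) (F : 'I_3 -> R) :
  \big[op/idx]_(k < 3) F k = op (F k0) (op (F k1) (F k2)).
Proof.
rewrite !big_ord_recl big_ord0 Monoid.mulm1.
by congr (op (F _) (op (F _) (F _))); apply: val_inj.
Qed.

Lemma occ_pm1_le n (r : {ffun 'I_n -> 'I_3}) : (occ k2 r + occ k0 r <= n)%N.
Proof. by rewrite -[X in (_ <= X)%N](sum_occ r) big_ord3 /=; lia. Qed.

Definition imbalance n (r : {ffun 'I_n -> 'I_3}) : nat := `|occ k2 r - occ k0 r|%N.

Section ReflectedWalk.
Variables (R : realType) (d : nat) (alpha z : R).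

Definition prob n (r : {ffun 'I_n -> 'I_3}) : R := \prod_(h < n) rprob alpha (r h).

Lemma prob_fcons n k (g : {ffun 'I_n -> 'I_3}) : prob (fcons k g) = rprob alpha k * prob g.
Proof. by rewrite /prob big_ord_recl fcons0; under eq_bigr do rewrite fconsS. Qed.

Lemma Amat_row (a b : nat) (j : 'I_d.+1) : (`|a - b| < d)%N ->
  Amat d alpha z (inord `|a - b|%N) j =
  \sum_(k < 3) rprob alpha k * Num.sqrt z ^+ ((k == k2) + (k == k0))
                 * (`|(k == k2) + a - ((k == k0) + b)|%N == j)%:R.
Proof.
move=> abd; rewrite big_ord3 /rprob /= !add0n !addn0 !mxE inordK; last lia.
have -> : (inord `|a - b|%N == j) = (`|a - b|%N == j) by rewrite -val_eqE /= inordK //; lia.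
have split_or m : (0 < m)%N ->
    ((j == m.-1 :> nat) || (j == m.+1 :> nat))%:R = (m.-1 == j)%:R + (m.+1 == j)%:R :> R.
  move=> m0; rewrite (eq_sym m.-1) (eq_sym m.+1).
  case: (eqVneq (j : nat) m.-1) => [->|_] /=; last by rewrite add0r.
  by rewrite (_ : (m.-1 == m.+1) = false) ?addr0 //; lia.
rewrite (ltn_eqF abd) -mulr_natr !expr0 !expr1 !mulr1.
have [ab|ab|ab] := ltngtP a b.
- have -> : `|a - (1 + b)%N|%N = `|a - b|%N.+1 by lia.
  have -> : `|(1 + a)%N - b|%N = `|a - b|%N.-1 by lia.
  rewrite ifN ?split_or; [by field | lia | lia].
- have -> : `|a - (1 + b)%N|%N = `|a - b|%N.-1 by lia.
  have -> : `|(1 + a)%N - b|%N = `|a - b|%N.+1 by lia.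
  rewrite ifN ?split_or; [by field | lia | lia].
- have -> : `|a - b|%N = 0%N by lia.
  have -> : `|a - (1 + b)%N|%N = 1%N by lia.
  have -> : `|(1 + a)%N - b|%N = 1%N by lia.
  by rewrite /= (eq_sym 1%N); ring.
Qed.

Lemma zeta_Amat_exp n (j : 'I_d.+1) : (n <= d)%N ->
  (zeta R d *m Amat d alpha z ^+ n) 0 j =
  \sum_(r : {ffun 'I_n -> 'I_3})
     prob r * Num.sqrt z ^+ (occ k2 r + occ k0 r) * (imbalance r == j)%:R.
Proof.
elim: n j => [|n IH] j Hn.
  rewrite expr0 mulmx1 mxE (big_pred1 [ffun=> k0]); last first.
    by move=> r; apply/esym/eqP/ffunP => -[].
  by rewrite /prob /imbalance /occ !big_ord0 mul1r expr0 mul1r eq_sym.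
rewrite exprSr mulmxA mxE.
under eq_bigr do rewrite IH 1?ltnW // mulr_suml.
rewrite exchange_big [RHS]big_fcons [RHS]exchange_big /=; apply: eq_bigr => g _.
have := occ_pm1_le g; rewrite /imbalance => g_le.
under eq_bigr do rewrite -mulrA.
rewrite -mulr_sumr sum_natr_eq_inord ?Amat_row ?mulr_sumr; [|lia|lia].
apply: eq_bigr => k _; rewrite prob_fcons !occ_fcons addnACA !exprD; ring.
Qed.

Lemma limit_valueE : 0 < z ->
  limit_value d alpha z = \sum_(r : {ffun 'I_d -> 'I_3}) prob r * z ^+ minn (occ k2 r) (occ k0 r).
Proof.
move=> z0; rewrite /limit_value mxE.
under eq_bigr do rewrite zeta_Amat_exp // mulr_suml.
rewrite exchange_big /=; apply: eq_bigr => r _.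
have := occ_pm1_le r; rewrite /imbalance => r_le.
under eq_bigr do rewrite -mulrA.
rewrite -mulr_sumr sum_natr_eq_inord; last lia.
by rewrite mxE inordK; [rewrite -mulrA sqrtrX_powRN_dist | lia].
Qed.

Lemma prob_gt0 n (r : {ffun 'I_n -> 'I_3}) : 0 < alpha < 1 / 2 -> 0 < prob r.
Proof.
case/andP=> a0 a12; apply: prodr_gt0 => h _; rewrite /rprob.
by case: ifP => _ //; lra.
Qed.

Lemma limit_value_gt0 : 0 < alpha < 1 / 2 -> 0 < z -> 0 < limit_value d alpha z.
Proof.
move=> a_bd z0; rewrite limit_valueE // (bigD1 [ffun=> k0]) //=.
rewrite ltr_wpDr ?mulr_gt0 ?prob_gt0 ?exprn_gt0 // sumr_ge0 // => r _.
by rewrite ltW ?mulr_gt0 ?prob_gt0 ?exprn_gt0.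
Qed.

End ReflectedWalk.

Section X1Asymptotics.
Variable R : realType.

Lemma X1_closed_form d (beta : R) (r : {ffun 'I_d -> 'I_3}) :
  X1 beta r = ((1 + expR (- beta)) / 2) ^+ occ k1 r
              * (expR (- beta) ^+ occ k2 r + expR (- beta) ^+ occ k0 r).
Proof.
set e := expR (- beta).
have prodE tau : \prod_(h < d) (1 - (1 - e) * rho r h tau) =
    \prod_(k < 3) (1 - (1 - e) * ((1 + tau * rval R k) / 2)) ^+ occ k r.
  exact: (prod_occ (fun k => 1 - (1 - e) * ((1 + tau * rval R k) / 2))).
rewrite /X1 !big_cons big_nil addr0 !prodE !big_ord3.
have -> : rval R k0 = -1 by rewrite /rval /=; ring.
have -> : rval R k1 = 0 by rewrite /rval /=; ring.
have -> : rval R k2 = 1 by rewrite /rval /=; ring.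
rewrite !(mul1r, mulN1r, opprK, oppr0).
have -> : 1 - (1 - e) * ((1 + -1) / 2) = 1 by field.
have -> : 1 - (1 - e) * ((1 + 0) / 2) = (1 + e) / 2 by field.
have -> : 1 - (1 - e) * ((1 + 1) / 2) = e by field.
rewrite !expr1n /=; ring.
Qed.

Definition X1_cofactor n (r : {ffun 'I_n -> 'I_3}) : {poly R} :=
  let m := minn (occ k2 r) (occ k0 r) in
  (2^-1 *: (1 + 'X)) ^+ occ k1 r * ('X^(occ k2 r - m) + 'X^(occ k0 r - m)).

Lemma X1E d (beta : R) (r : {ffun 'I_d -> 'I_3}) :
  X1 beta r = ('X^(minn (occ k2 r) (occ k0 r)) * X1_cofactor r).[expR (- beta)].
Proof.
rewrite X1_closed_form /X1_cofactor !hornerE /= -mulrA mulrCA.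
congr (_ * _); first by rewrite mulrC.
by rewrite mulrDr -!exprD !subnKC ?geq_minl ?geq_minr.
Qed.

Lemma X1_cofactor0_gt0 n (r : {ffun 'I_n -> 'I_3}) : 0 < (X1_cofactor r).[0].
Proof.
rewrite /X1_cofactor !hornerE mulr_gt0 ?exprn_gt0 //.
by case: leqP => _; rewrite subnn expr0; [apply: ltr_wpDr | apply: ltr_wpDl]; rewrite ?exprn_ge0.
Qed.

Lemma X1_powR_cvg d (z : R) (r : {ffun 'I_d -> 'I_3}) : 0 < z ->
  X1 beta r `^ yb z beta @[beta --> +oo] --> z ^+ minn (occ k2 r) (occ k0 r).
Proof.
move=> z0; under eq_cvg do rewrite X1E.
exact: horner_expRN_powR_cvg (X1_cofactor0_gt0 r).
Qed.

End X1Asymptotics.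

Theorem lemma6p2 (R : realType) (d : nat) (alpha z : R) :
  (3 <= d)%N -> 0 < alpha < 1 / 2 -> 0 < z < 1 ->
  ln (EX1y d alpha z beta) @[beta --> +oo] --> ln (limit_value d alpha z).
Proof.
move=> _ alpha_bd /andP[z0 _].
have EX1y_cvg : EX1y d alpha z beta @[beta --> +oo] --> limit_value d alpha z.
  rewrite limit_valueE //; apply: cvg_big => [|r _]; first exact: add_continuous.
  by apply: cvgMl_tmp; exact: X1_powR_cvg.
by apply: continuous_cvg EX1y_cvg; apply: continuous_ln; exact: limit_value_gt0.
Qed.
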